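(* Let $n\ge3$, $\rho>0$, and let $h$ be a smooth function on $[0,\rho)$ such that $$F(x,y)=\sqrt{(1+|\overline{x}|^2)|\overline{y}|^2+\langle\overline{x},\overline{y}\rangle^2+e^{x^0}(y^0)^2}+h(|\overline{x}|)\langle\overline{x},\overline{y}\rangle$$ is a Finsler metric on $\mathbb{R}\times\mathbb{B}^n(\rho)$ (for instance $h(r)=\frac{k}{1+r^2}$ with $|k|<2$). Then $F$ is a cylindrically symmetric Finsler metric with vanishing Douglas curvature.
   Context: Points $x=(x^0,\overline{x})\in\mathbb{R}\times\mathbb{B}^n(\rho)$, tangent vectors $y=(y^0,\overline{y})$, $|\cdot|,\langle\cdot,\cdot\rangle$ Euclidean on $\mathbb{R}^n$. A Finsler metric $F$ is cylindrically symmetric if $F((x^0,O\overline{x}),(y^0,O\overline{y}))=F((x^0,\overline{x}),(y^0,\overline{y}))$ for all $O\in O(n)$. The Douglas curvature is $D^A_{BCD}=\frac{\partial^3}{\partial y^B\partial y^C\partial y^D}\big(G^A-\frac{1}{n+2}\sum_{E=0}^n\frac{\partial G^E}{\partial y^E}y^A\big)$, $A,B,C,D\in\{0,\dots,n\}$, where $G^A=\frac14g^{AB}\{[F^2]_{x^Cy^B}y^C-[F^2]_{x^B}\}$ are the geodesic coefficients ($g_{AB}=\frac12[F^2]_{y^Ay^B}$, summation convention). *)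

From HB Require Import structures.
From mathcomp Require Import all_boot all_order all_algebra.
From mathcomp Require Import all_classical all_reals all_analysis.
Set Implicit Arguments. Unset Strict Implicit. Unset Printing Implicit Defensive.
Import Order.TTheory GRing.Theory Num.Theory.
Import numFieldNormedType.Exports.
Local Open Scope ring_scope.
Local Open Scope classical_set_scope.

Section Defs.
Variable R : realType.

Definition evec N (i : 'I_N) : 'rV[R]_N := delta_mx 0 i.

(* a partial derivative of a function F(x,y) on R^N x R^N:
   inl i = d/dx^i, inr i = d/dy^i *)
Definition pd N (d : ('I_N + 'I_N)%type) (f : 'rV[R]_N -> 'rV[R]_N -> R)
  : 'rV[R]_N -> 'rV[R]_N -> R :=
  fun x y => match d with
  | inl i => (fun t : R => f (x + t *: evec i) y)^`() 0
  | inr i => (fun t : R => f x (y + t *: evec i))^`() 0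
  end.

Definition pdiff N (s : seq ('I_N + 'I_N)%type) f := foldr (@pd N) f s.

Definition smooth_on N (W : set ('rV[R]_N * 'rV[R]_N))
  (f : 'rV[R]_N -> 'rV[R]_N -> R) :=
  forall s : seq ('I_N + 'I_N)%type,
    forall p, W p ->
      {for p, continuous (fun q : 'rV[R]_N * 'rV[R]_N => pdiff s f q.1 q.2)} /\
      forall d : ('I_N + 'I_N)%type,
        derivable (fun t : R => match d with
                     | inl i => pdiff s f (p.1 + t *: evec i) p.2
                     | inr i => pdiff s f p.1 (p.2 + t *: evec i) end) 0 1.

Definition Fsq N (F : 'rV[R]_N -> 'rV[R]_N -> R) := fun x y => F x y ^+ 2.

Definition fund_g N (F : 'rV[R]_N -> 'rV[R]_N -> R) x y : 'M[R]_N :=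
  \matrix_(A, B) (2^-1 * pd (inr A) (pd (inr B) (Fsq F)) x y).

Definition posdef N (M : 'M[R]_N) :=
  forall v : 'rV[R]_N, v != 0 -> 0 < (v *m M *m v^T) 0 0.

Definition Finsler_on N (U : set 'rV[R]_N) (F : 'rV[R]_N -> 'rV[R]_N -> R) :=
  [/\ smooth_on [set p | U p.1 /\ p.2 != 0] F,
      (forall x y, U x -> 0 <= F x y),
      (forall x y (l : R), U x -> 0 < l -> F x (l *: y) = l * F x y) &
      (forall x y, U x -> y != 0 -> posdef (fund_g F x y))].

Definition geod N (F : 'rV[R]_N -> 'rV[R]_N -> R) (A : 'I_N) x y : R :=
  4^-1 * \sum_(B < N) (invmx (fund_g F x y)) A B *
    (\sum_(C < N) pd (inl C) (pd (inr B) (Fsq F)) x y * y 0 C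
       - pd (inl B) (Fsq F) x y).

(* Douglas curvature D^A_{BCD}; here N = dimension, so 1/(N+1) *)
Definition douglas N (F : 'rV[R]_N -> 'rV[R]_N -> R) (A B C D : 'I_N) x y : R :=
  let H := fun x y : 'rV[R]_N =>
    geod F A x y
    - (N.+1%:R)^-1 * (\sum_(E < N) pd (inr E) (geod F E) x y) * y 0 A in
  pd (inr B) (pd (inr C) (pd (inr D) H)) x y.

Definition x0 n (x : 'rV[R]_(1 + n)) : R := lsubmx x 0 0.
Definition xbar n (x : 'rV[R]_(1 + n)) : 'rV[R]_n := rsubmx x.

Definition dot n (u v : 'rV[R]_n) : R := (u *m v^T) 0 0.
Definition enorm n (u : 'rV[R]_n) : R := Num.sqrt (dot u u).

Definition orthogonal_mx n (O : 'M[R]_n) := O^T *m O = 1%:M.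

Definition cyl_sym n (U : set 'rV[R]_(1 + n)) (F : 'rV[R]_(1 + n) -> 'rV[R]_(1 + n) -> R) :=
  forall O : 'M[R]_n, orthogonal_mx O -> forall x y : 'rV[R]_(1 + n), U x ->
    F (row_mx (lsubmx x) (xbar x *m O^T)) (row_mx (lsubmx y) (xbar y *m O^T))
    = F x y.

Definition cyl_domain (n : nat) (rho : R) : set 'rV[R]_(1 + n) :=
  [set x | enorm (xbar x) < rho].

(* smooth on [0,rho): restriction of a C^infinity function on an open interval *)
Definition smooth_Ico (h : R -> R) (rho : R) :=
  exists g : R -> R, exists e : R, [/\ 0 < e,
    (forall r, 0 <= r < rho -> g r = h r) &
    (forall (k : nat) r, - e < r < rho ->
        derivable (iter k (fun f : R -> R => f^`()) g) r 1)].

Definition Fex n (h : R -> R) (x y : 'rV[R]_(1 + n)) : R :=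
  Num.sqrt ((1 + enorm (xbar x) ^+ 2) * enorm (xbar y) ^+ 2
            + dot (xbar x) (xbar y) ^+ 2 + expR (x0 x) * x0 y ^+ 2)
  + h (enorm (xbar x)) * dot (xbar x) (xbar y).

End Defs.
Arguments cyl_domain {R} n rho.

(* F = alpha + beta is a Randers metric: alpha is the norm of the Riemannian metric
   (1 + |xbar|^2) |ybar|^2 + <xbar, ybar>^2 + e^(x^0) (y^0)^2, and the 1-form
   beta = h(|xbar|) <xbar, ybar> is closed, its coefficient h(r) xbar being the gradient
   of a function of r = |xbar|.  For a Randers metric with closed beta, solving the linear
   system that defines the geodesic coefficients gives G^A = G_alpha^A + P y^A, where
   G_alpha^A is quadratic in y and P = r_00 / (2F).  For any spray of this form, Euler's
   identity for the 1-homogeneous P turns G^A - 1/(N+1) (dG^E/dy^E) y^A into a quadratic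
   form in y, whose third y-derivatives vanish.  Cylindrical symmetry holds because F only
   involves x^0, y^0 and inner products of xbar and ybar. *)

From HB Require Import structures.
From mathcomp Require Import all_boot all_order all_algebra.
From mathcomp Require Import all_classical all_reals all_analysis.
From mathcomp Require Import ring lra.
Import Order.TTheory GRing.Theory Num.Theory.
Import numFieldNormedType.Exports.

Set Implicit Arguments. Unset Strict Implicit. Unset Printing Implicit Defensive.
Local Open Scope ring_scope.
Local Open Scope classical_set_scope.

Section RealDerivatives.
Variable R : realType.
Implicit Types (f g : R -> R) (t a b : R).

Lemma is_derive_ext f g t a :
  (forall s, f s = g s) -> is_derive t 1 f a -> is_derive t 1 g a.
Proof. by move=> /funext ->. Qed.

Lemma is_derive_near f g t a :
  (\forall s \near t, f s = g s) -> is_derive t 1 f a -> is_derive t 1 g a.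
Proof. exact: near_eq_is_derive. Qed.

(* Versions of the library instances for functions written pointwise, so that
   they can be applied with the derivative left to be computed. *)
Lemma is_deriveDf f g t a b : is_derive t 1 f a -> is_derive t 1 g b ->
  is_derive t 1 (fun s => f s + g s) (a + b).
Proof. by move=> fa gb; exact: is_deriveD. Qed.

Lemma is_deriveMf f g t a b : is_derive t 1 f a -> is_derive t 1 g b ->
  is_derive t 1 (fun s => f s * g s) (f t * b + g t * a).
Proof. by move=> fa gb; exact: is_deriveM. Qed.

Lemma is_deriveVf f t a : is_derive t 1 f a -> f t != 0 ->
  is_derive t 1 (fun s => (f s)^-1) (- (f t)^-2 * a).
Proof. by move=> fa ft0; exact: is_deriveV. Qed.

Lemma is_derive_compf f g t a b : is_derive t 1 g b -> is_derive (g t) 1 f a ->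
  is_derive t 1 (fun s => f (g s)) (a * b).
Proof. by move=> gb fa; exact: is_derive1_comp. Qed.

Lemma is_derive_sqrtf g t b : is_derive t 1 g b -> 0 < g t ->
  is_derive t 1 (fun s => Num.sqrt (g s)) (b / (2 * Num.sqrt (g t))).
Proof.
move=> gb gt0; have := is_derive_compf gb (is_derive1_sqrt gt0).
by move/is_derive_eq; apply; rewrite mulrC.
Qed.

Lemma is_derive_sqf f t a : is_derive t 1 f a ->
  is_derive t 1 (fun s => f s ^+ 2) (2 * f t * a).
Proof.
move=> fa; apply: is_derive_ext (is_derive_eq (is_deriveMf fa fa) _) => [s|].
  by rewrite expr2.
ring.
Qed.

Lemma is_derive_expRf g t b : is_derive t 1 g b ->
  is_derive t 1 (fun s => expR (g s)) (expR (g t) * b).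
Proof. by move=> gb; exact: is_derive_compf gb (is_derive_expR _). Qed.

Lemma is_derive0_affine a b : is_derive (0 : R) 1 (fun t => a + t * b) b.
Proof.
have := is_deriveDf (is_derive_cst a (0 : R) 1)
  (is_deriveMf (is_derive_id (0 : R) 1) (is_derive_cst b (0 : R) 1)).
by move/is_derive_eq; apply; rewrite mulr0 mulr1 !add0r.
Qed.

Lemma derive1_val f t a : is_derive t 1 f a -> derive1 f t = a.
Proof. by move=> fa; rewrite derive1E; exact: derive_val. Qed.

Lemma is_derive_continuous f t a : is_derive t 1 f a -> f x @[x --> t] --> f t.
Proof. by case=> fd _; apply/differentiable_continuous/derivable1_diffP. Qed.

Lemma is_derive0_mul_id f : {for 0, continuous f} ->
  is_derive (0 : R) 1 (fun t => t * f t) (f 0).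
Proof.
move=> fc; apply/is_derive1_caratheodory; exists f.
by split => // t; rewrite subr0 mul0r subr0 mulrC.
Qed.

End RealDerivatives.

Section LinearForms.
Variables (R : realType) (m : nat).
Local Notation W := 'rV[R]_m.
Implicit Types (f g : W -> R) (u v w y e : W).

Definition linear_form f :=
  (forall u v, f (u + v) = f u + f v) /\ (forall a u, f (a *: u) = a * f u).

Definition bilinear_form (B : W -> W -> R) :=
  (forall v, linear_form (B^~ v)) /\ (forall u, linear_form (B u)).

Lemma linear_formD f u v : linear_form f -> f (u + v) = f u + f v.
Proof. by case=> ->. Qed.

Lemma linear_formZ f a u : linear_form f -> f (a *: u) = a * f u.
Proof. by case=> _ ->. Qed.

Lemma linear_form_add f g :
  linear_form f -> linear_form g -> linear_form (fun u => f u + g u).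
Proof. by move=> [fD fZ] [gD gZ]; split=> *; rewrite ?fD ?gD ?fZ ?gZ; ring. Qed.

Lemma linear_form_sub f g :
  linear_form f -> linear_form g -> linear_form (fun u => f u - g u).
Proof. by move=> [fD fZ] [gD gZ]; split=> *; rewrite ?fD ?gD ?fZ ?gZ; ring. Qed.

Lemma linear_form_mull k f : linear_form f -> linear_form (fun u => k * f u).
Proof. by move=> [fD fZ]; split=> *; rewrite ?fD ?fZ; ring. Qed.

Lemma linear_form_mulr k f : linear_form f -> linear_form (fun u => f u * k).
Proof. by move=> [fD fZ]; split=> *; rewrite ?fD ?fZ; ring. Qed.

Lemma linear_form_sum k (F : 'I_k -> W -> R) :
  (forall i, linear_form (F i)) -> linear_form (fun u => \sum_i F i u).
Proof.
move=> FL; split=> [u v|a u]; last first.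
  by rewrite mulr_sumr; apply: eq_bigr => i _; rewrite linear_formZ.
by rewrite -big_split; apply: eq_bigr => i _; rewrite linear_formD.
Qed.

Lemma linear_form_coord i : linear_form (fun u : W => u 0 i).
Proof. by split=> *; rewrite !mxE. Qed.

Lemma linear_form_expand f u : linear_form f -> f u = \sum_i u 0 i * f (evec R i).
Proof.
move=> fL; rewrite {1}(row_sum_delta u).
have f0 : f 0 = 0 by rewrite -(scale0r 0) linear_formZ // mul0r.
by elim/big_rec2: _ => // i a b _ <-; rewrite linear_formD // linear_formZ.
Qed.

Lemma is_derive_linear_form f y e : linear_form f ->
  is_derive (0 : R) 1 (fun t => f (y + t *: e)) (f e).
Proof.
move=> fL; apply: is_derive_ext (is_derive0_affine (f y) (f e)) => t.
by rewrite linear_formD // linear_formZ.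
Qed.

Lemma is_derive_bilinear_form (B : W -> W -> R) y e : bilinear_form B ->
  is_derive (0 : R) 1 (fun t => B (y + t *: e) (y + t *: e)) (B y e + B e y).
Proof.
move=> [BL BR].
have BDl u v w : B (u + v) w = B u w + B v w by exact: linear_formD (BL w).
have BZl a u w : B (a *: u) w = a * B u w by exact: linear_formZ (BL w).
have D : is_derive (0 : R) 1 (fun t => B y (y + t *: e) + t * B e (y + t *: e))
    (B y e + B e y).
  have := is_deriveDf (is_derive_linear_form y e (BR y))
    (is_deriveMf (is_derive_id (0 : R) 1) (is_derive_linear_form y e (BR e))).
  by move/is_derive_eq; apply; rewrite scale0r !addr0 mul0r add0r mulr1.
by apply: is_derive_ext D => t; rewrite BDl BZl.
Qed.

Lemma quadform_mxE (M : 'M[R]_m) v :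
  (v *m M *m v^T) 0 0 = \sum_j (\sum_i v 0 i * M i j) * v 0 j.
Proof. by rewrite mxE; apply: eq_bigr => j _; rewrite !mxE. Qed.

Lemma posdef_unitmx (M : 'M[R]_m) : posdef M -> M \in unitmx.
Proof.
move=> Mpos; rewrite unitmxE unitfE; apply/negP => /det0P [v v0 vM].
by have := Mpos v v0; rewrite vM mul0mx mxE ltxx.
Qed.

Lemma sum_invmx_solve (M : 'M[R]_m) (z c : 'I_m -> R) : M \in unitmx ->
  (forall B, \sum_A M B A * z A = c B) -> forall A, \sum_B invmx M A B * c B = z A.
Proof.
move=> Mu Mz A; have Mz' : M *m (\col_i z i) = \col_i c i.
  by apply/colP => B; rewrite !mxE -Mz; apply: eq_bigr => j _; rewrite mxE.
have := congr1 (fun C : 'cV_m => (invmx M *m C) A 0) Mz'; rewrite /= mulKmx // !mxE => ->.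
by apply: eq_bigr => B _; rewrite mxE.
Qed.

Lemma sum_mul_invmx (M : 'M[R]_m) (c : 'I_m -> R) : M \in unitmx ->
  forall B, \sum_A M B A * (\sum_C invmx M A C * c C) = c B.
Proof.
move=> Mu B; have := congr1 (fun C : 'cV_m => C B 0) (mulKVmx Mu (\col_i c i)).
rewrite /= !mxE => <-; apply: eq_bigr => A _; congr (_ * _); rewrite mxE.
by apply: eq_bigr => C _; rewrite mxE.
Qed.

End LinearForms.
Arguments linear_form_coord {R m}.

Section EuclideanDot.
Variables (R : realType) (m : nat).
Implicit Types u v w : 'rV[R]_m.

Lemma dotE u v : dot u v = \sum_i u 0 i * v 0 i.
Proof. by rewrite /dot mxE; apply: eq_bigr => i _; rewrite mxE. Qed.

Lemma dotC u v : dot u v = dot v u.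
Proof. by rewrite !dotE; apply: eq_bigr => i _; rewrite mulrC. Qed.

Lemma dotDl u v w : dot (u + v) w = dot u w + dot v w.
Proof. by rewrite !dotE -big_split; apply: eq_bigr => i _; rewrite mxE mulrDl. Qed.

Lemma dotZl a u w : dot (a *: u) w = a * dot u w.
Proof. by rewrite !dotE mulr_sumr; apply: eq_bigr => i _; rewrite mxE mulrA. Qed.

Lemma dotDr u v w : dot w (u + v) = dot w u + dot w v.
Proof. by rewrite dotC dotDl !(dotC w). Qed.

Lemma dotZr a u w : dot w (a *: u) = a * dot w u.
Proof. by rewrite dotC dotZl dotC. Qed.

Lemma dot_bilinear : bilinear_form (@dot R m).
Proof. by split=> u; split=> *; rewrite ?dotDl ?dotZl ?dotDr ?dotZr. Qed.

Lemma dot_ge0 u : 0 <= dot u u.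
Proof. by rewrite dotE sumr_ge0 // => i _; rewrite -expr2 sqr_ge0. Qed.

Lemma dot_gt0 u : u != 0 -> 0 < dot u u.
Proof.
move=> u0; rewrite lt_def dot_ge0 andbT; apply: contra u0; rewrite dotE.
rewrite psumr_eq0 => [/allP u2_eq0|i _]; last by rewrite -expr2 sqr_ge0.
apply/eqP/rowP => i; rewrite mxE.
by have := u2_eq0 i (mem_index_enum _); rewrite -expr2 sqrf_eq0 => /eqP.
Qed.

Lemma enorm_sq u : enorm u ^+ 2 = dot u u.
Proof. by rewrite sqr_sqrtr // dot_ge0. Qed.

Lemma enorm0 : enorm (0 : 'rV[R]_m) = 0.
Proof. by rewrite /enorm -(scale0r 0) dotZl mul0r sqrtr0. Qed.

Lemma dot_orthogonal (O : 'M[R]_m) u v :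
  orthogonal_mx O -> dot (u *m O^T) (v *m O^T) = dot u v.
Proof. by rewrite /dot trmx_mul trmxK mulmxA -(mulmxA u) => ->; rewrite mulmx1. Qed.

End EuclideanDot.

Section PartialDerivatives.
Variables (R : realType) (N : nat).
Local Notation V := 'rV[R]_N.
Local Notation ev := (@evec R N).

Lemma near_nonzero (y e : V) : y != 0 -> \forall t \near (0 : R), y + t *: e != 0.
Proof.
move=> y0; have cv : y + t *: e @[t --> (0 : R)] --> y + 0 *: e.
  by apply: cvgD; [exact: cvg_cst | exact: scalel_continuous].
by rewrite scale0r !addr0 in cv; exact: cvgr_neq0 cv y0.
Qed.

Lemma pd_inr_eq (f1 f2 : V -> V -> R) x y i : y != 0 ->
  (forall y', y' != 0 -> f1 x y' = f2 x y') -> pd (inr i) f1 x y = pd (inr i) f2 x y.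
Proof.
move=> y0 f12; rewrite /pd !derive1E; apply: near_eq_derive.
by apply: filterS (near_nonzero (ev i) y0) => t /f12.
Qed.

Lemma pd_inr_linear_form (f : V -> R) i : linear_form f ->
  pd (inr i) (fun _ y => f y) = fun _ _ => f (ev i).
Proof.
move=> fL; apply/funext => x; apply/funext => y; apply: derive1_val.
exact: is_derive_linear_form.
Qed.

Lemma pd_inr_bilinear_form (Q : V -> V -> R) i : bilinear_form Q ->
  pd (inr i) (fun _ y => Q y y) = fun _ y => Q y (ev i) + Q (ev i) y.
Proof.
move=> QB; apply/funext => x; apply/funext => y; apply: derive1_val.
exact: is_derive_bilinear_form.
Qed.

Lemma pd_inr_cst (c : R) (i : 'I_N) : pd (inr i) (fun _ _ : V => c) = fun _ _ => 0.
Proof. by apply/funext => x; apply/funext => y; apply: derive1_val; exact: is_derive_cst. Qed.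

Lemma pd3_inr_quadratic_form (Q : V -> V -> R) i j k : bilinear_form Q ->
  pd (inr i) (pd (inr j) (pd (inr k) (fun _ y => Q y y))) = fun _ _ => 0.
Proof.
move=> [QL QR]; rewrite pd_inr_bilinear_form // pd_inr_linear_form ?pd_inr_cst //.
exact: linear_form_add.
Qed.

End PartialDerivatives.

Section ProjectivelyQuadraticSpray.
Variables (R : realType) (N : nat).
Local Notation V := 'rV[R]_N.
Local Notation ev := (@evec R N).
Variables (F : V -> V -> R) (x : V).
Variables (Gamma : 'I_N -> V -> V -> R) (P : V -> R) (dP : V -> V -> R).
Hypothesis Gamma_bilinear : forall A, bilinear_form (Gamma A).
Hypothesis dP_linear : forall y, linear_form (dP y).
Hypothesis is_derive_P : forall y e, y != 0 ->
  is_derive (0 : R) 1 (fun t => P (y + t *: e)) (dP y e).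
Hypothesis dP_euler : forall y, y != 0 -> dP y y = P y.
Hypothesis geodE : forall A y, y != 0 -> geod F A x y = Gamma A y y + P y * y 0 A.

Definition Gamma_trace (u : V) := \sum_E (Gamma E u (ev E) + Gamma E (ev E) u).

Lemma Gamma_trace_linear : linear_form Gamma_trace.
Proof.
apply: linear_form_sum => E; have [GL GR] := Gamma_bilinear E.
exact: linear_form_add.
Qed.

Lemma pd_geod E y : y != 0 -> pd (inr E) (geod F E) x y =
  Gamma E y (ev E) + Gamma E (ev E) y + (P y + y 0 E * dP y (ev E)).
Proof.
move=> y0; apply: derive1_val.
apply: (@is_derive_near _
  (fun t => Gamma E (y + t *: ev E) (y + t *: ev E) + P (y + t *: ev E) * (y + t *: ev E) 0 E)).
  by apply: filterS (near_nonzero (ev E) y0) => t /geodE ->.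
have := is_deriveDf (is_derive_bilinear_form y (ev E) (Gamma_bilinear E))
  (is_deriveMf (is_derive_P (ev E) y0) (is_derive_linear_form y (ev E) (linear_form_coord E))).
by move/is_derive_eq; apply; rewrite scale0r !addr0 /evec mxE !eqxx mulr1.
Qed.

Lemma sum_pd_geod y : y != 0 ->
  \sum_E pd (inr E) (geod F E) x y = Gamma_trace y + N.+1%:R * P y.
Proof.
move=> y0; under eq_bigr do rewrite pd_geod //.
rewrite big_split /= -/(Gamma_trace y) big_split /= sumr_const card_ord.
by rewrite -(linear_form_expand y (dP_linear y)) dP_euler // -mulrSr mulr_natl.
Qed.

Definition douglas_form A (u v : V) := Gamma A u v - N.+1%:R^-1 * Gamma_trace u * v 0 A.

Lemma douglas_form_bilinear A : bilinear_form (douglas_form A).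
Proof.
have [GL GR] := Gamma_bilinear A.
split=> w; apply: linear_form_sub => //.
  exact/linear_form_mulr/linear_form_mull/Gamma_trace_linear.
exact/linear_form_mull/linear_form_coord.
Qed.

Lemma douglas_reduced_geodE A y : y != 0 ->
  geod F A x y - N.+1%:R^-1 * (\sum_E pd (inr E) (geod F E) x y) * y 0 A =
  douglas_form A y y.
Proof.
move=> y0; rewrite sum_pd_geod // geodE // /douglas_form.
by field; rewrite addrC natr1 pnatr_eq0.
Qed.

Lemma douglas_eq0_projective A B C D y : y != 0 -> douglas F A B C D x y = 0.
Proof.
move=> y0; rewrite /douglas.
transitivity (pd (inr B) (pd (inr C) (pd (inr D) (fun _ y => douglas_form A y y))) x y).
  apply: (pd_inr_eq B y0) => y1 y10; apply: (pd_inr_eq C y10) => y2 y20.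
  by apply: (pd_inr_eq D y20) => y3 y30; exact: douglas_reduced_geodE.
by rewrite pd3_inr_quadratic_form //; exact: douglas_form_bilinear.
Qed.

End ProjectivelyQuadraticSpray.

Section RandersMetric.
Variables (R : realType) (N : nat).
Local Notation V := 'rV[R]_N.
Local Notation ev := (@evec R N).
Variable U : set V.
Variables (a : V -> V -> V -> R) (da : V -> V -> V -> V -> R).
Variables (b : V -> V -> R) (db : V -> V -> V -> R).
Hypothesis a_bilinear : forall x, bilinear_form (a x).
Hypothesis aC : forall x u v, a x u v = a x v u.
Hypothesis a_gt0 : forall x y, y != 0 -> 0 < a x y y.
Hypothesis da_linear : forall x u v, linear_form (fun e => da x e u v).
Hypothesis da_bilinear : forall x e, bilinear_form (da x e).
Hypothesis is_derive_a : forall x e u v, U x ->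
  is_derive (0 : R) 1 (fun t => a (x + t *: e) u v) (da x e u v).
Hypothesis b_linear : forall x, linear_form (b x).
Hypothesis db_bilinear : forall x, bilinear_form (db x).
(* db x e u is the derivative of b x u in the direction e; its symmetry says that
   beta is closed. *)
Hypothesis dbC : forall x u v, db x u v = db x v u.
Hypothesis is_derive_b : forall x e u, U x ->
  is_derive (0 : R) 1 (fun t => b (x + t *: e) u) (db x e u).

Let aDr x u v w : a x u (v + w) = a x u v + a x u w.
Proof. exact: linear_formD ((a_bilinear x).2 u). Qed.
Let aZr x k u v : a x u (k *: v) = k * a x u v.
Proof. exact: linear_formZ ((a_bilinear x).2 u). Qed.
Let bD x u v : b x (u + v) = b x u + b x v.
Proof. exact: linear_formD (b_linear x). Qed.
Let bZ x k u : b x (k *: u) = k * b x u.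
Proof. exact: linear_formZ (b_linear x). Qed.

Definition alpha x y := Num.sqrt (a x y y).
Definition randers x y := alpha x y + b x y.

(* randers_dy x y e and randers_dx x y e are the derivatives of F at (x, y) in the
   directions (0, e) and (e, 0); randers_dyy x y e e' and randers_dxy x y e e'
   differentiate randers_dy x y e' in the same two directions. *)
Definition randers_dy x y e := a x y e / alpha x y + b x e.
Definition randers_dyy x y e e' :=
  a x e e' / alpha x y - a x y e * a x y e' / alpha x y ^+ 3.
Definition randers_dx x y e := da x e y y / (2 * alpha x y) + db x e y.
Definition randers_dxy x y e e' :=
  da x e y e' / alpha x y - a x y e' * da x e y y / (2 * alpha x y ^+ 3) + db x e e'.

Lemma alpha_gt0 x y : y != 0 -> 0 < alpha x y.
Proof. by move=> y0; rewrite sqrtr_gt0 a_gt0. Qed.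

Lemma alpha_sq x y : y != 0 -> alpha x y ^+ 2 = a x y y.
Proof. by move=> y0; rewrite sqr_sqrtr // ltW // a_gt0. Qed.

Lemma is_derive_alpha_y x y e : y != 0 ->
  is_derive (0 : R) 1 (fun t => alpha x (y + t *: e)) (a x y e / alpha x y).
Proof.
move=> y0; have al0 := alpha_gt0 x y0.
have a0 : 0 < a x (y + 0 *: e) (y + 0 *: e) by rewrite scale0r !addr0 a_gt0.
have := is_derive_sqrtf (is_derive_bilinear_form y e (a_bilinear x)) a0.
move/is_derive_eq; apply; rewrite scale0r !addr0 (aC x e y) -/(alpha x y).
by field; rewrite gt_eqF.
Qed.

Lemma is_derive_randers_y x y e : y != 0 ->
  is_derive (0 : R) 1 (fun t => randers x (y + t *: e)) (randers_dy x y e).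
Proof.
move=> y0; exact: is_deriveDf (is_derive_alpha_y x e y0) (is_derive_linear_form y e (b_linear x)).
Qed.

Lemma pd_y_randers_sq x y B : y != 0 ->
  pd (inr B) (Fsq randers) x y = 2 * randers x y * randers_dy x y (ev B).
Proof.
move=> y0; apply: derive1_val.
by have := is_derive_sqf (is_derive_randers_y x (ev B) y0); rewrite scale0r !addr0.
Qed.

Lemma is_derive_randers_dy_y x y e e' : y != 0 ->
  is_derive (0 : R) 1 (fun t => randers_dy x (y + t *: e) e') (randers_dyy x y e e').
Proof.
move=> y0; have al0 := alpha_gt0 x y0.
have al0' : alpha x (y + 0 *: e) != 0 by rewrite scale0r !addr0 gt_eqF.
have := is_deriveDf (is_deriveMf
    (is_derive_linear_form y e ((a_bilinear x).1 e')) (is_deriveVf (is_derive_alpha_y x e y0) al0'))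
  (is_derive_cst (b x e') (0 : R) 1).
move/is_derive_eq; apply; rewrite /randers_dyy scale0r !addr0.
by field; rewrite gt_eqF.
Qed.

Lemma pd_yy_randers_sq x y A B : y != 0 ->
  pd (inr A) (pd (inr B) (Fsq randers)) x y =
  2 * (randers_dy x y (ev A) * randers_dy x y (ev B) + randers x y * randers_dyy x y (ev A) (ev B)).
Proof.
move=> y0; apply: derive1_val.
apply: (@is_derive_near _
  (fun t => 2 * randers x (y + t *: ev A) * randers_dy x (y + t *: ev A) (ev B))).
  by apply: filterS (near_nonzero (ev A) y0) => t /pd_y_randers_sq ->.
have := is_deriveMf
  (is_deriveMf (is_derive_cst (2 : R) (0 : R) 1) (is_derive_randers_y x (ev A) y0))
  (is_derive_randers_dy_y x (ev A) (ev B) y0).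
by move/is_derive_eq; apply; rewrite scale0r !addr0; ring.
Qed.

Lemma is_derive_alpha_x x e y : U x -> y != 0 ->
  is_derive (0 : R) 1 (fun t => alpha (x + t *: e) y) (da x e y y / (2 * alpha x y)).
Proof.
move=> xU y0; have a0 : 0 < a (x + 0 *: e) y y by rewrite scale0r addr0 a_gt0.
by have := is_derive_sqrtf (is_derive_a e y y xU) a0; rewrite scale0r addr0.
Qed.

Lemma is_derive_randers_x x e y : U x -> y != 0 ->
  is_derive (0 : R) 1 (fun t => randers (x + t *: e) y) (randers_dx x y e).
Proof.
move=> xU y0; exact: is_deriveDf (is_derive_alpha_x e xU y0) (is_derive_b e y xU).
Qed.

Lemma pd_x_randers_sq x y B : U x -> y != 0 ->
  pd (inl B) (Fsq randers) x y = 2 * randers x y * randers_dx x y (ev B).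
Proof.
move=> xU y0; apply: derive1_val.
by have := is_derive_sqf (is_derive_randers_x (ev B) xU y0); rewrite scale0r addr0.
Qed.

Lemma is_derive_randers_dy_x x e y e' : U x -> y != 0 ->
  is_derive (0 : R) 1 (fun t => randers_dy (x + t *: e) y e') (randers_dxy x y e e').
Proof.
move=> xU y0; have al0 := alpha_gt0 x y0.
have al0' : alpha (x + 0 *: e) y != 0 by rewrite scale0r addr0 gt_eqF.
have := is_deriveDf (is_deriveMf (is_derive_a e y e' xU)
  (is_deriveVf (is_derive_alpha_x e xU y0) al0')) (is_derive_b e e' xU).
move/is_derive_eq; apply; rewrite /randers_dxy scale0r addr0.
by field; rewrite gt_eqF.
Qed.

Lemma pd_xy_randers_sq x y C B : U x -> y != 0 ->
  pd (inl C) (pd (inr B) (Fsq randers)) x y =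
  2 * (randers_dx x y (ev C) * randers_dy x y (ev B) + randers x y * randers_dxy x y (ev C) (ev B)).
Proof.
move=> xU y0; apply: derive1_val.
apply: (@is_derive_ext _
  (fun t => 2 * randers (x + t *: ev C) y * randers_dy (x + t *: ev C) y (ev B))).
  by move=> t; rewrite pd_y_randers_sq.
have := is_deriveMf
  (is_deriveMf (is_derive_cst (2 : R) (0 : R) 1) (is_derive_randers_x (ev C) xU y0))
  (is_derive_randers_dy_x (ev C) (ev B) xU y0).
by move/is_derive_eq; apply; rewrite scale0r addr0; ring.
Qed.

Lemma randers_dy_linear x y : linear_form (randers_dy x y).
Proof. exact/linear_form_add/b_linear/linear_form_mulr/(a_bilinear x).2. Qed.

Lemma randers_dyy_bilinear x y : bilinear_form (randers_dyy x y).
Proof.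
have [aL aR] := a_bilinear x.
split=> u; apply: linear_form_sub.
- exact: linear_form_mulr.
- exact/linear_form_mulr/linear_form_mulr/aR.
- exact/linear_form_mulr/aR.
- exact/linear_form_mulr/linear_form_mull/aR.
Qed.

Lemma randers_dx_linear x y : linear_form (randers_dx x y).
Proof.
apply: linear_form_add; first exact/linear_form_mulr/da_linear.
exact: (db_bilinear x).1.
Qed.

Lemma randers_dxy_linear x y e' : linear_form (randers_dxy x y ^~ e').
Proof.
apply: linear_form_add; last exact: (db_bilinear x).1.
apply: linear_form_sub; first exact/linear_form_mulr/da_linear.
exact/linear_form_mulr/linear_form_mull/da_linear.
Qed.

Lemma randers_dy_self x y : y != 0 -> randers_dy x y y = randers x y.
Proof.
move=> y0; have al0 := alpha_gt0 x y0.
by rewrite /randers_dy /randers -alpha_sq //; field; rewrite gt_eqF.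
Qed.

Lemma randers_dyy_self x y e : y != 0 -> randers_dyy x y y e = 0.
Proof.
move=> y0; have al0 := alpha_gt0 x y0.
by rewrite /randers_dyy -alpha_sq //; field; rewrite gt_eqF.
Qed.

Lemma fund_g_randers x y A B : y != 0 ->
  fund_g randers x y A B =
  randers_dy x y (ev A) * randers_dy x y (ev B) + randers x y * randers_dyy x y (ev A) (ev B).
Proof. by move=> y0; rewrite mxE pd_yy_randers_sq // mulrA mulVf ?mul1r // pnatr_eq0. Qed.

Lemma fund_g_randers_quad x y v : y != 0 ->
  (v *m fund_g randers x y *m v^T) 0 0 =
  randers_dy x y v ^+ 2 + randers x y * randers_dyy x y v v.
Proof.
move=> y0; have [dyyL dyyR] := randers_dyy_bilinear x y.
have row_g j : \sum_i v 0 i * fund_g randers x y i j =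
    randers_dy x y v * randers_dy x y (ev j) + randers x y * randers_dyy x y v (ev j).
  rewrite (linear_form_expand v (randers_dy_linear x y)).
  have -> : randers_dyy x y v (ev j) = \sum_i v 0 i * randers_dyy x y (ev i) (ev j).
    exact: linear_form_expand (dyyL _).
  rewrite mulr_suml mulr_sumr -big_split /=; apply: eq_bigr => i _.
  by rewrite fund_g_randers //; ring.
rewrite quadform_mxE; under eq_bigr do rewrite row_g.
rewrite expr2 {3}(linear_form_expand v (randers_dy_linear x y)).
rewrite (linear_form_expand v (dyyR v)) mulr_sumr mulr_sumr -big_split /=.
by apply: eq_bigr => j _; ring.
Qed.

Lemma randers_neq0 x y : y != 0 -> posdef (fund_g randers x y) -> randers x y != 0.
Proof.
move=> y0 /(_ y y0); rewrite fund_g_randers_quad // randers_dy_self // randers_dyy_self //.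
by rewrite mulr0 addr0; apply: contraTneq => ->; rewrite expr2 mulr0 ltxx.
Qed.

Definition metric_mx x : 'M[R]_N := \matrix_(i, j) a x (ev i) (ev j).

Lemma metric_mx_quad x v : (v *m metric_mx x *m v^T) 0 0 = a x v v.
Proof.
have [aL aR] := a_bilinear x.
rewrite quadform_mxE [RHS](linear_form_expand v (aR v)); apply: eq_bigr => j _.
have -> : a x v (ev j) = \sum_i v 0 i * a x (ev i) (ev j) by exact: linear_form_expand (aL _).
by rewrite mulrC; congr (_ * _); apply: eq_bigr => i _; rewrite mxE.
Qed.

Lemma metric_mx_unit x : metric_mx x \in unitmx.
Proof. by apply: posdef_unitmx => v v0; rewrite metric_mx_quad a_gt0. Qed.

(* The polarized geodesic coefficients of the Riemannian metric a:
   alpha_spray x A y y = 1/4 a^{AB} (2 [a_{BC}]_{x^D} y^C y^D - [a_{CD}]_{x^B} y^C y^D). *)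
Definition alpha_spray x A u v :=
  4^-1 * \sum_B invmx (metric_mx x) A B * (2 * da x u v (ev B) - da x (ev B) u v).

Lemma alpha_spray_bilinear x A : bilinear_form (alpha_spray x A).
Proof.
split=> w; apply/linear_form_mull/linear_form_sum => B; apply/linear_form_mull/linear_form_sub.
- exact/linear_form_mull/da_linear.
- exact: (da_bilinear x _).1.
- exact/linear_form_mull/(da_bilinear x _).1.
- exact: (da_bilinear x _).2.
Qed.

Definition alpha_spray_vec x y : V := \row_A alpha_spray x A y y.

Lemma a_alpha_spray x y B :
  a x (ev B) (alpha_spray_vec x y) = 4^-1 * (2 * da x y y (ev B) - da x (ev B) y y).
Proof.
rewrite (linear_form_expand _ ((a_bilinear x).2 _)).
rewrite -(sum_mul_invmx (fun C => 2 * da x y y (ev C) - da x (ev C) y y) (metric_mx_unit x) B).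
by rewrite mulr_sumr; apply: eq_bigr => A _; rewrite !mxE /alpha_spray; ring.
Qed.

Lemma a_y_alpha_spray x y : a x y (alpha_spray_vec x y) = 4^-1 * da x y y y.
Proof.
have -> : a x y (alpha_spray_vec x y) = \sum_i y 0 i * a x (ev i) (alpha_spray_vec x y).
  exact: linear_form_expand ((a_bilinear x).1 _).
have E1 : da x y y y = \sum_i y 0 i * da x y y (ev i).
  exact: linear_form_expand ((da_bilinear x y).2 y).
have E2 : da x y y y = \sum_i y 0 i * da x (ev i) y y.
  exact: linear_form_expand _ (da_linear x y y).
transitivity (4^-1 * (2 * da x y y y - da x y y y)); last by ring.
rewrite {1}E1 E2 mulr_sumr -sumrB mulr_sumr; apply: eq_bigr => i _.
by rewrite a_alpha_spray; ring.
Qed.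

(* beta_r x y y is r_00 = b_{A|B} y^A y^B, the alpha-covariant derivative of beta. *)
Definition beta_r x u v := db x u v - 2 * \sum_A alpha_spray x A u v * b x (ev A).

Lemma beta_r_bilinear x : bilinear_form (beta_r x).
Proof.
have [dbL dbR] := db_bilinear x.
split=> w; apply: linear_form_sub => //; apply/linear_form_mull/linear_form_sum => A.
  exact/linear_form_mulr/(alpha_spray_bilinear x A).1.
exact/linear_form_mulr/(alpha_spray_bilinear x A).2.
Qed.

Lemma beta_r_diag x y : beta_r x y y = db x y y - 2 * b x (alpha_spray_vec x y).
Proof.
rewrite /beta_r (linear_form_expand (alpha_spray_vec x y) (b_linear x)).
by congr (_ - 2 * _); apply: eq_bigr => A _; rewrite mxE.
Qed.

Definition proj_factor x y := beta_r x y y / (2 * randers x y).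

Lemma fund_g_geod x y B : U x -> y != 0 -> randers x y != 0 ->
  \sum_A fund_g randers x y B A * (4 * (alpha_spray x A y y + proj_factor x y * y 0 A)) =
  \sum_C pd (inl C) (pd (inr B) (Fsq randers)) x y * y 0 C - pd (inl B) (Fsq randers) x y.
Proof.
move=> xU y0 F0; set G := alpha_spray_vec x y + proj_factor x y *: y.
have [dyyL dyyR] := randers_dyy_bilinear x y.
transitivity (4 * (randers_dy x y (ev B) * randers_dy x y G
                   + randers x y * randers_dyy x y (ev B) G)).
  rewrite (linear_form_expand G (randers_dy_linear x y)) (linear_form_expand G (dyyR _)).
  rewrite !mulr_sumr -big_split /= mulr_sumr; apply: eq_bigr => A _.
  by rewrite fund_g_randers // !mxE; ring.
have -> : \sum_C pd (inl C) (pd (inr B) (Fsq randers)) x y * y 0 C =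
    2 * (randers_dy x y (ev B) * randers_dx x y y + randers x y * randers_dxy x y y (ev B)).
  under eq_bigr do rewrite pd_xy_randers_sq //.
  have -> : randers_dxy x y y (ev B) = \sum_C y 0 C * randers_dxy x y (ev C) (ev B).
    exact: linear_form_expand (randers_dxy_linear x y _).
  rewrite (linear_form_expand y (randers_dx_linear x y)) !mulr_sumr -big_split /= mulr_sumr.
  by apply: eq_bigr => C _; ring.
have al0 := alpha_gt0 x y0.
rewrite pd_x_randers_sq // /randers_dy /randers_dyy /randers_dx /randers_dxy /G.
rewrite !aDr !aZr bD bZ a_alpha_spray a_y_alpha_spray (aC x (ev B) y) (dbC x (ev B) y).
(* Without the closedness of beta, terms in db x (ev B) y - db x y (ev B) would remain. *)
rewrite /proj_factor beta_r_diag -alpha_sq //.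
by move: F0; rewrite /randers => F0; field; rewrite F0 gt_eqF.
Qed.

Lemma geod_randers x y A : U x -> y != 0 -> posdef (fund_g randers x y) ->
  geod randers A x y = alpha_spray x A y y + proj_factor x y * y 0 A.
Proof.
move=> xU y0 gpos; have F0 := randers_neq0 y0 gpos.
rewrite /geod (sum_invmx_solve (posdef_unitmx gpos) (fun B => fund_g_geod B xU y0 F0)).
by rewrite mulrA mulVf ?mul1r // pnatr_eq0.
Qed.

Definition proj_factor_dy x y e :=
  (beta_r x y e + beta_r x e y) / (2 * randers x y)
  - beta_r x y y * randers_dy x y e / (2 * randers x y ^+ 2).

Lemma proj_factor_dy_linear x y : linear_form (proj_factor_dy x y).
Proof.
have [rL rR] := beta_r_bilinear x.
apply: linear_form_sub; first exact/linear_form_mulr/linear_form_add.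
exact/linear_form_mulr/linear_form_mull/randers_dy_linear.
Qed.

Lemma is_derive_proj_factor x y e : y != 0 -> randers x y != 0 ->
  is_derive (0 : R) 1 (fun t => proj_factor x (y + t *: e)) (proj_factor_dy x y e).
Proof.
move=> y0 F0.
have F0' : 2 * randers x (y + 0 *: e) != 0 by rewrite scale0r addr0 mulf_neq0 ?pnatr_eq0.
have := is_deriveMf (is_derive_bilinear_form y e (beta_r_bilinear x))
  (is_deriveVf (is_deriveMf (is_derive_cst (2 : R) (0 : R) 1) (is_derive_randers_y x e y0)) F0').
move/is_derive_eq; apply; rewrite /proj_factor_dy scale0r addr0.
by field; rewrite F0.
Qed.

Lemma proj_factor_dy_self x y : y != 0 -> randers x y != 0 ->
  proj_factor_dy x y y = proj_factor x y.
Proof.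
move=> y0 F0; rewrite /proj_factor_dy /proj_factor randers_dy_self //.
by field; rewrite F0.
Qed.

Theorem douglas_randers x : U x -> (forall y, y != 0 -> posdef (fund_g randers x y)) ->
  forall A B C D y, y != 0 -> douglas randers A B C D x y = 0.
Proof.
move=> xU gpos A B C D y y0.
have F0 y' : y' != 0 -> randers x y' != 0 by move=> y'0; exact: randers_neq0 y'0 (gpos y' y'0).
apply: (douglas_eq0_projective (Gamma := alpha_spray x) (P := proj_factor x)
  (dP := proj_factor_dy x)) => //.
- exact: alpha_spray_bilinear.
- exact: proj_factor_dy_linear.
- by move=> y' e y'0; exact: is_derive_proj_factor y'0 (F0 y' y'0).
- by move=> y' y'0; exact: proj_factor_dy_self y'0 (F0 y' y'0).
- by move=> A' y' y'0; exact: geod_randers xU y'0 (gpos y' y'0).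
Qed.

End RandersMetric.

Lemma cyl_sym_Fex (R : realType) n rho (h : R -> R) : cyl_sym (cyl_domain n rho) (Fex h).
Proof.
move=> O O_orth x y _.
by rewrite /Fex /x0 /xbar !row_mxKr !row_mxKl /enorm !(dot_orthogonal _ _ O_orth).
Qed.

Section CylindricalRanders.
Variables (R : realType) (n : nat).
Local Notation V := 'rV[R]_(1 + n).
Implicit Types x y u v w e : V.

Lemma x0D u v : x0 (u + v) = x0 u + x0 v.
Proof. by rewrite /x0 !mxE. Qed.

Lemma x0Z k u : x0 (k *: u) = k * x0 u.
Proof. by rewrite /x0 !mxE. Qed.

Lemma xbarD u v : xbar (u + v) = xbar u + xbar v.
Proof. by apply/rowP => i; rewrite /xbar !mxE. Qed.

Lemma xbarZ k u : xbar (k *: u) = k *: xbar u.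
Proof. by apply/rowP => i; rewrite /xbar !mxE. Qed.

Lemma x0_xbar_eq0 y : x0 y = 0 -> xbar y = 0 -> y = 0.
Proof.
rewrite /x0 /xbar => y0 yb; rewrite -[y]hsubmxK yb.
have -> : lsubmx y = 0 by apply/rowP => i; rewrite ord1 y0 mxE.
by rewrite row_mx0.
Qed.

Definition cyl_metric x u v :=
  (1 + dot (xbar x) (xbar x)) * dot (xbar u) (xbar v)
  + dot (xbar x) (xbar u) * dot (xbar x) (xbar v) + expR (x0 x) * (x0 u * x0 v).

Definition cyl_metric_dx x e u v :=
  2 * dot (xbar x) (xbar e) * dot (xbar u) (xbar v)
  + (dot (xbar e) (xbar u) * dot (xbar x) (xbar v) + dot (xbar x) (xbar u) * dot (xbar e) (xbar v))
  + expR (x0 x) * x0 e * (x0 u * x0 v).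

Lemma cyl_metric_bilinear x : bilinear_form (cyl_metric x).
Proof.
by split=> w; split=> *;
  rewrite /cyl_metric ?xbarD ?xbarZ ?x0D ?x0Z ?dotDl ?dotDr ?dotZl ?dotZr; ring.
Qed.

Lemma cyl_metricC x u v : cyl_metric x u v = cyl_metric x v u.
Proof. by rewrite /cyl_metric (dotC (xbar u)); ring. Qed.

Lemma cyl_metric_gt0 x y : y != 0 -> 0 < cyl_metric x y y.
Proof.
move=> y0; rewrite /cyl_metric; have x2 := dot_ge0 (xbar x); have ex0 := expR_gt0 (x0 x).
have T1 : 0 <= (1 + dot (xbar x) (xbar x)) * dot (xbar y) (xbar y).
  by rewrite mulr_ge0 ?dot_ge0 ?addr_ge0.
have T2 : 0 <= dot (xbar x) (xbar y) * dot (xbar x) (xbar y) by rewrite -expr2 sqr_ge0.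
have T3 : 0 <= expR (x0 x) * (x0 y * x0 y).
  by apply: mulr_ge0; [exact: ltW | rewrite -expr2 sqr_ge0].
have [yb0|yb0] := eqVneq (xbar y) 0.
  have y00 : x0 y != 0 by apply: contra_neq y0 => y00; exact: x0_xbar_eq0.
  have : 0 < expR (x0 x) * (x0 y * x0 y).
    by rewrite mulr_gt0 // -expr2 lt_def sqr_ge0 sqrf_eq0 y00.
  lra.
have : 0 < (1 + dot (xbar x) (xbar x)) * dot (xbar y) (xbar y).
  by apply: mulr_gt0; [lra | exact: dot_gt0].
lra.
Qed.

Lemma cyl_metric_dx_linear x u v : linear_form (fun e => cyl_metric_dx x e u v).
Proof.
by split=> *; rewrite /cyl_metric_dx ?xbarD ?xbarZ ?x0D ?x0Z ?dotDr ?dotZr ?dotDl ?dotZl; ring.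
Qed.

Lemma cyl_metric_dx_bilinear x e : bilinear_form (cyl_metric_dx x e).
Proof.
by split=> w; split=> *;
  rewrite /cyl_metric_dx ?xbarD ?xbarZ ?x0D ?x0Z ?dotDl ?dotDr ?dotZl ?dotZr; ring.
Qed.

Lemma is_derive_cyl_metric_x x e u v :
  is_derive (0 : R) 1 (fun t => cyl_metric (x + t *: e) u v) (cyl_metric_dx x e u v).
Proof.
have [dotL dotR] := @dot_bilinear R n.
have Dxx := is_derive_bilinear_form (xbar x) (xbar e) (@dot_bilinear R n).
have Dx (w : 'rV[R]_n) := is_derive_linear_form (xbar x) (xbar e) (dotL w).
have D : is_derive (0 : R) 1 (fun t =>
      (1 + dot (xbar x + t *: xbar e) (xbar x + t *: xbar e)) * dot (xbar u) (xbar v)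
      + dot (xbar x + t *: xbar e) (xbar u) * dot (xbar x + t *: xbar e) (xbar v)
      + expR (x0 x + t * x0 e) * (x0 u * x0 v))
    (cyl_metric_dx x e u v).
  have := is_deriveDf (is_deriveDf
      (is_deriveMf (is_deriveDf (is_derive_cst (1 : R) (0 : R) 1) Dxx)
                   (is_derive_cst (dot (xbar u) (xbar v)) (0 : R) 1))
      (is_deriveMf (Dx (xbar u)) (Dx (xbar v))))
    (is_deriveMf (is_derive_expRf (is_derive0_affine (x0 x) (x0 e)))
                 (is_derive_cst (x0 u * x0 v) (0 : R) 1)).
  move/is_derive_eq; apply; rewrite /cyl_metric_dx !scale0r !mul0r !addr0 (dotC (xbar e)) /cst.
  ring.
by apply: is_derive_ext D => t; rewrite /cyl_metric xbarD xbarZ x0D x0Z.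
Qed.

Variables (h g : R -> R) (rho eps : R).
Hypothesis rho_gt0 : 0 < rho.
Hypothesis eps_gt0 : 0 < eps.
Hypothesis g_eq_h : forall r, 0 <= r < rho -> g r = h r.
Hypothesis g_derivable : forall r, - eps < r < rho -> derivable g r 1.

Definition cyl_beta x u := h (enorm (xbar x)) * dot (xbar x) (xbar u).

(* h is only constrained on [0, rho); its derivative is read off the smooth extension g. *)
Definition cyl_beta_dx x e u :=
  if xbar x == 0 then h 0 * dot (xbar e) (xbar u)
  else derive1 g (enorm (xbar x)) * dot (xbar x) (xbar e) / enorm (xbar x) * dot (xbar x) (xbar u)
       + h (enorm (xbar x)) * dot (xbar e) (xbar u).

Lemma cyl_beta_linear x : linear_form (cyl_beta x).
Proof. by split=> *; rewrite /cyl_beta ?xbarD ?xbarZ ?dotDr ?dotZr; ring. Qed.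

Lemma cyl_beta_dx_bilinear x : bilinear_form (cyl_beta_dx x).
Proof.
by split=> w; split=> *; rewrite /cyl_beta_dx; case: ifP => _;
  rewrite ?xbarD ?xbarZ ?dotDl ?dotDr ?dotZl ?dotZr; ring.
Qed.

Lemma cyl_beta_dxC x e u : cyl_beta_dx x e u = cyl_beta_dx x u e.
Proof. by rewrite /cyl_beta_dx (dotC (xbar e)); case: ifP => _; ring. Qed.

Lemma is_derive_dot_xbar x e :
  is_derive (0 : R) 1 (fun t => dot (xbar (x + t *: e)) (xbar (x + t *: e)))
    (2 * dot (xbar x) (xbar e)).
Proof.
have := is_derive_bilinear_form (xbar x) (xbar e) (@dot_bilinear R n).
move/is_derive_eq => /(_ (2 * dot (xbar x) (xbar e))) D.
apply: is_derive_ext (D _) => [t|]; first by rewrite xbarD xbarZ.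
by rewrite (dotC (xbar e)); ring.
Qed.

Lemma enorm_xbar_continuous x e : {for 0, continuous (fun t : R => enorm (xbar (x + t *: e)))}.
Proof.
apply: (@continuous_comp _ _ _ (fun t : R => dot (xbar (x + t *: e)) (xbar (x + t *: e))) Num.sqrt).
  exact: is_derive_continuous (is_derive_dot_xbar x e).
exact: sqrt_continuous.
Qed.

Lemma near_cyl_domain x e :
  cyl_domain n rho x -> \forall t \near (0 : R), cyl_domain n rho (x + t *: e).
Proof.
move=> xU; have := cvgr_lt _ (enorm_xbar_continuous (x := x) (e := e)) rho.
by rewrite /= scale0r addr0 => /(_ _ xU).
Qed.

Lemma is_derive_enorm_xbar x e : xbar x != 0 ->
  is_derive (0 : R) 1 (fun t => enorm (xbar (x + t *: e))) (dot (xbar x) (xbar e) / enorm (xbar x)).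
Proof.
move=> xb0; have xx0 := dot_gt0 xb0; have nx0 : 0 < enorm (xbar x) by rewrite sqrtr_gt0.
have d0 : 0 < dot (xbar (x + 0 *: e)) (xbar (x + 0 *: e)) by rewrite scale0r addr0.
have := is_derive_sqrtf (is_derive_dot_xbar x e) d0.
move/is_derive_eq; apply; rewrite scale0r addr0 -/(enorm (xbar x)).
by field; rewrite gt_eqF.
Qed.

Lemma g_eq_h_near x e : cyl_domain n rho x ->
  \forall t \near (0 : R), g (enorm (xbar (x + t *: e))) = h (enorm (xbar (x + t *: e))).
Proof.
move=> xU; apply: filterS (near_cyl_domain e xU) => t tU.
by apply: g_eq_h; rewrite sqrtr_ge0.
Qed.

Lemma is_derive_cyl_beta_x_axis x e u : cyl_domain n rho x -> xbar x = 0 ->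
  is_derive (0 : R) 1 (fun t => cyl_beta (x + t *: e) u) (h 0 * dot (xbar e) (xbar u)).
Proof.
move=> xU xb0; pose phi t := g (enorm (xbar (x + t *: e))) * dot (xbar e) (xbar u).
have g0 : {for enorm (xbar (x + 0 *: e)), continuous g}.
  rewrite scale0r addr0 xb0 enorm0; apply/differentiable_continuous/derivable1_diffP.
  by apply: g_derivable; rewrite oppr_lt0 eps_gt0.
have phi_cont : {for 0, continuous phi}.
  by apply: cvgMr_tmp; exact: continuous_comp (enorm_xbar_continuous (x := x) (e := e)) g0.
apply: (@is_derive_near _ (fun t => t * phi t)).
  apply: filterS (g_eq_h_near e xU) => t ght.
  by rewrite /phi ght /cyl_beta !xbarD !xbarZ xb0 !add0r dotZl; ring.
apply: is_derive_eq (is_derive0_mul_id phi_cont) _.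
by rewrite /phi scale0r addr0 xb0 enorm0 g_eq_h // lexx rho_gt0.
Qed.

Lemma is_derive_cyl_beta_x_off_axis x e u : cyl_domain n rho x -> xbar x != 0 ->
  is_derive (0 : R) 1 (fun t => cyl_beta (x + t *: e) u)
    (derive1 g (enorm (xbar x)) * dot (xbar x) (xbar e) / enorm (xbar x) * dot (xbar x) (xbar u)
     + h (enorm (xbar x)) * dot (xbar e) (xbar u)).
Proof.
move=> xU xb0; have xU' : 0 <= enorm (xbar x) < rho by rewrite sqrtr_ge0.
have Dg : is_derive (enorm (xbar (x + 0 *: e))) 1 g (derive1 g (enorm (xbar x))).
  rewrite scale0r addr0 derive1E; apply: derivableP; apply: g_derivable.
  by rewrite (lt_le_trans _ (sqrtr_ge0 _)) ?oppr_lt0.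
have := is_deriveMf (is_derive_compf (is_derive_enorm_xbar e xb0) Dg)
  (is_derive_linear_form (xbar x) (xbar e) ((@dot_bilinear R n).1 (xbar u))).
move/is_derive_eq => D; apply: (is_derive_near _ (D _ _)).
  by apply: filterS (g_eq_h_near e xU) => t ght; rewrite ght /cyl_beta !xbarD !xbarZ.
by rewrite !scale0r !addr0 g_eq_h //; ring.
Qed.

Lemma is_derive_cyl_beta_x x e u : cyl_domain n rho x ->
  is_derive (0 : R) 1 (fun t => cyl_beta (x + t *: e) u) (cyl_beta_dx x e u).
Proof.
move=> xU; rewrite /cyl_beta_dx; case: eqP => [xb0|/eqP xb0].
  exact: is_derive_cyl_beta_x_axis.
exact: is_derive_cyl_beta_x_off_axis.
Qed.

Lemma Fex_randers : Fex h = randers cyl_metric cyl_beta.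
Proof.
apply/funext => x; apply/funext => y.
by rewrite /Fex /randers /alpha /cyl_metric /cyl_beta !enorm_sq !expr2.
Qed.

Theorem douglas_Fex x : cyl_domain n rho x ->
  (forall y, y != 0 -> posdef (fund_g (Fex h) x y)) ->
  forall A B C D y, y != 0 -> douglas (Fex h) A B C D x y = 0.
Proof.
rewrite Fex_randers; apply: (douglas_randers cyl_metric_bilinear cyl_metricC cyl_metric_gt0
  cyl_metric_dx_linear cyl_metric_dx_bilinear (fun x e u v _ => is_derive_cyl_metric_x x e u v)
  cyl_beta_linear cyl_beta_dx_bilinear cyl_beta_dxC is_derive_cyl_beta_x).
Qed.

End CylindricalRanders.

Theorem mainTheorem8 (R : realType) (n : nat) (rho : R) (h : R -> R) :
  (3 <= n)%N -> 0 < rho -> smooth_Ico h rho ->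
  Finsler_on (cyl_domain n rho) (Fex h) ->
  cyl_sym (cyl_domain n rho) (Fex h) /\
  (forall x y : 'rV[R]_(1 + n), cyl_domain n rho x -> y != 0 ->
     forall A B C D : 'I_(1 + n), douglas (Fex h) A B C D x y = 0).
Proof.
move=> _ rho_gt0 [g [eps [eps_gt0 g_eq_h g_smooth]]] [_ _ _ g_posdef].
split; first exact: cyl_sym_Fex.
move=> x y xU y0 A B C D.
apply: (douglas_Fex rho_gt0 eps_gt0 g_eq_h _ xU) => // [r r_in|y' y'0].
- exact: (g_smooth 0%N r r_in).
- exact: g_posdef.
Qed.
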